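(* A maximal product two-action game with $m$ players has exactly $\frac12\bigl(V(m)+!m\bigr)$ Nash equilibria, where $V(m)=\sum_{l=0}^m\binom{m}{l}2^l\cdot!(m-l)$.
   Context: Fix an integer $m\ge 1$ and $\mathcal A=\{1,\dots,m\}$. A two-action game is a finite game in normal form with player set $\mathcal A$ in which each player $i$ has exactly two pure strategies $s^i_0,s^i_1$, together with utility functions $U^i:S\to\mathbb R$, where $S=\prod_{i\in\mathcal A}\{s^i_0,s^i_1\}$. A mixed strategy combination is identified with $\underline\gamma=(\gamma^1,\dots,\gamma^m)\in[0,1]^m$, where $\gamma^i$ is the probability with which player $i$ plays $s^i_1$. The expected utility $V^i$ is the multilinear extension $V^i(\underline\gamma)=\sum_{(j_1,\dots,j_m)\in\{0,1\}^m}\prod_{k=1}^m p_k(j_k)\,U^i(s^1_{j_1},\dots,s^m_{j_m})$ with $p_k(1)=\gamma^k$, $p_k(0)=1-\gamma^k$. Write $\underline\gamma^{-i}=(\gamma^j)_{j\ne i}$ and $\lambda^i(\underline\gamma^{-i}):=V^i(\underline\gamma)|_{\gamma^i=1}-V^i(\underline\gamma)|_{\gamma^i=0}$. A Nash equilibrium is a point $\underline\gamma\in[0,1]^m$ such that for every $i$: $\lambda^i(\underline\gamma^{-i})=0$ if $0<\gamma^i<1$; $\lambda^i(\underline\gamma^{-i})\le 0$ if $\gamma^i=0$; $\lambda^i(\underline\gamma^{-i})\ge 0$ if $\gamma^i=1$. For $\underline\gamma$ put $L(\underline\gamma)=\{i:\gamma^i\in\{0,1\}\}$. A two-action game is a product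 two-action game if there exist $\underline v=(v_1,\dots,v_m)\in\{0,1\}^m$ and numbers $a^i_j\in(0,1)$ for $i,j\in\mathcal A$, $i\ne j$, with $a^{i_1}_j\neq a^{i_2}_j$ whenever $i_1\neq i_2$ and both differ from $j$, such that $\lambda^i(\underline\gamma^{-i})=(-1)^{v_i}\prod_{j\in\mathcal A\setminus\{i\}}(\gamma^j-a^i_j)$ for every $i\in\mathcal A$. For $\pi\in S_m$, $F(\pi)=\{i:\pi(i)=i\}$; $\mathrm{Der}_m=\{\pi\in S_m: F(\pi)=\emptyset\}$; $!n$ is the number of derangements of an $n$-element set ($!0=1$). $EC(\pi):=\{\underline\gamma\in[0,1]^m \mid L(\underline\gamma)=F(\pi),\ \gamma^j=a^{\pi(j)}_j \text{ for all } j\notin F(\pi)\}$. A product two-action game is maximal if for every $\pi\in S_m\setminus\mathrm{Der}_m$ exactly half of the elements of $EC(\pi)$ are Nash equilibria. *)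

From HB Require Import structures.
From mathcomp Require Import all_boot all_order all_algebra all_fingroup.
From mathcomp Require Import reals.
Set Implicit Arguments. Unset Strict Implicit. Unset Printing Implicit Defensive.
Import Order.TTheory GRing.Theory Num.Theory.
Local Open Scope ring_scope.

Section TwoAction.
Variables (R : realType) (m : nat).

(* A pure profile is s : {ffun 'I_m -> bool}, where
   s i = true means player i plays s^i_1 and false means s^i_0.
   A mixed profile is gamma : {ffun 'I_m -> R} (gamma i = prob. of s^i_1). *)

Definition in01 (g : {ffun 'I_m -> R}) : Prop := forall i, 0 <= g i <= 1.

Definition expU (U : 'I_m -> {ffun 'I_m -> bool} -> R) (i : 'I_m)
    (g : {ffun 'I_m -> R}) : R :=
  \sum_(s : {ffun 'I_m -> bool})
     (\prod_(k : 'I_m) (if s k then g k else 1 - g k)) * U i s.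

Definition setc (g : {ffun 'I_m -> R}) (i : 'I_m) (x : R) : {ffun 'I_m -> R} :=
  [ffun k => if k == i then x else g k].

Definition lam (U : 'I_m -> {ffun 'I_m -> bool} -> R) (i : 'I_m)
    (g : {ffun 'I_m -> R}) : R :=
  expU U i (setc g i 1) - expU U i (setc g i 0).

Definition nash (U : 'I_m -> {ffun 'I_m -> bool} -> R) (g : {ffun 'I_m -> R})
    : Prop :=
  in01 g /\
  forall i : 'I_m,
    [/\ (0 < g i < 1 -> lam U i g = 0),
        (g i = 0 -> lam U i g <= 0) &
        (g i = 1 -> lam U i g >= 0)].

Definition product_game (U : 'I_m -> {ffun 'I_m -> bool} -> R)
    (v : 'I_m -> bool) (a : 'I_m -> 'I_m -> R) : Prop :=
  [/\ (forall i j : 'I_m, i != j -> 0 < a i j < 1),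
      (forall i1 i2 j : 'I_m, i1 != j -> i2 != j -> i1 != i2 -> a i1 j != a i2 j)
    & (forall (i : 'I_m) (g : {ffun 'I_m -> R}), in01 g ->
         lam U i g = (-1) ^+ v i * \prod_(j : 'I_m | j != i) (g j - a i j))].

Definition Lset (g : {ffun 'I_m -> R}) (i : 'I_m) : Prop := g i = 0 \/ g i = 1.

Definition fixedp (p : {perm 'I_m}) (i : 'I_m) : bool := p i == i.

Definition EC (a : 'I_m -> 'I_m -> R) (p : {perm 'I_m}) (g : {ffun 'I_m -> R})
    : Prop :=
  [/\ in01 g,
      (forall i, Lset g i <-> fixedp p i)
    & (forall j, ~~ fixedp p j -> g j = a (p j) j)].

End TwoAction.

Definition has_card (T : eqType) (P : T -> Prop) (n : nat) : Prop :=
  exists s : seq T, [/\ uniq s, (forall x, x \in s <-> P x) & size s = n].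

Definition derangement {m : nat} (p : {perm 'I_m}) : bool :=
  [forall i, p i != i].

Definition maximal_game (R : realType) (m : nat)
    (U : 'I_m -> {ffun 'I_m -> bool} -> R) (a : 'I_m -> 'I_m -> R) : Prop :=
  forall p : {perm 'I_m}, ~~ derangement p ->
    exists n k : nat,
      [/\ has_card (EC a p) n,
          has_card (fun g => EC a p g /\ nash U g) k
        & (2 * k = n)%N].

Definition subfact (n : nat) : nat := #|[set p : {perm 'I_n} | derangement p]|.

Definition Vcount (m : nat) : nat :=
  (\sum_(l < m.+1) 'C(m, l) * 2 ^ l * subfact (m - l))%N.

From HB Require Import structures.
From mathcomp Require Import all_boot all_order all_algebra all_fingroup.
From mathcomp Require Import reals.
Set Implicit Arguments. Unset Strict Implicit. Unset Printing Implicit Defensive.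
Import Order.TTheory GRing.Theory Num.Theory.

(* Every Nash equilibrium lies in exactly one set EC(pi): at an interior
   coordinate i the vanishing of lambda^i forces gamma^j = a^i_j for some j <> i,
   and since the a^i_j are pairwise distinct in i, sending i to this j is a
   permutation of the interior players.  EC(pi) has 2^|F(pi)| points; for a
   derangement its only point is an equilibrium, otherwise maximality says that
   half of them are.  Hence 2N = sum_pi 2^|F(pi)| + !m, and since the
   permutations with fixed set S correspond to the derangements of the
   complement of S, grouping by |S| = l turns the sum into V(m). *)

Lemma has_card_unique (T : eqType) (P : T -> Prop) n1 n2 :
  has_card P n1 -> has_card P n2 -> n1 = n2.
Proof.
move=> [s1 [u1 m1 <-]] [s2 [u2 m2 <-]].
apply: perm_size; apply: uniq_perm => // x.
by apply/idP/idP => x_s; [apply/m2/m1|apply/m1/m2].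
Qed.

Lemma has_card_bigcup_seq (T : eqType) (I : eqType) (Q : I -> T -> Prop)
    (n : I -> nat) (r : seq I) :
  uniq r -> (forall i, has_card (Q i) (n i)) ->
  (forall i j x, Q i x -> Q j x -> i = j) ->
  has_card (fun x => exists2 i, i \in r & Q i x) (\sum_(i <- r) n i).
Proof.
move=> + Qcard Qdisj; elim: r => [_|i r IH /= /andP [ir ur]].
  by exists [::]; split; rewrite ?big_nil // => x; split => // -[].
have [s [us ms ss]] := IH ur; have [si [usi msi ssi]] := Qcard i.
exists (si ++ s); split; last by rewrite size_cat big_cons ss ssi.
- rewrite cat_uniq usi us andbT; apply/hasP => -[x /ms [j jr Qjx] /msi Qix].
  by move: ir; rewrite (Qdisj _ _ _ Qix Qjx) jr.
- move=> x; rewrite mem_cat; split.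
    case/orP => [/msi Qix|/ms [j jr Qjx]]; first by exists i; rewrite ?mem_head.
    by exists j; rewrite // inE jr orbT.
  case=> j; rewrite inE => /orP [/eqP -> /msi -> //|jr Qjx].
  by apply/orP; right; apply/ms; exists j.
Qed.

Lemma has_card_bigcup (T : eqType) (I : finType) (Q : I -> T -> Prop)
    (n : I -> nat) (P : T -> Prop) :
  (forall i, has_card (Q i) (n i)) ->
  (forall i j x, Q i x -> Q j x -> i = j) ->
  (forall x, P x <-> exists i, Q i x) ->
  has_card P (\sum_i n i).
Proof.
move=> Qcard Qdisj PQ.
have [s [us ms sz]] := has_card_bigcup_seq (index_enum_uniq I) Qcard Qdisj.
exists s; split => // x; rewrite ms PQ.
by split=> [[i _ Qix]|[i Qix]]; exists i; rewrite ?mem_index_enum.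
Qed.

Lemma has_card_imset (T : eqType) (S : finType) (A : {set S}) (f : S -> T)
    (P : T -> Prop) :
  {in A &, injective f} -> (forall x, P x <-> exists2 y, y \in A & x = f y) ->
  has_card P #|A|.
Proof.
move=> f_inj PE; exists [seq f y | y <- enum A]; split.
- rewrite map_inj_in_uniq ?enum_uniq //.
  by apply: sub_in2 f_inj => y; rewrite mem_enum.
- move=> x; rewrite PE; split=> [/mapP [y]|[y yA ->]].
    by rewrite mem_enum => yA ->; exists y.
  by apply: map_f; rewrite mem_enum.
- by rewrite size_map -cardE.
Qed.

Definition derangements (T : finType) := [set p : {perm T} | [forall x, p x != x]].

Lemma card_derangements_le (T1 T2 : finType) (f : T1 -> T2) (g : T2 -> T1) :
  cancel f g -> cancel g f -> #|derangements T1| <= #|derangements T2|.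
Proof.
move=> fK gK; have injf := can_inj fK; have injg := can_inj gK.
have conj_inj (p : {perm T1}) : injective (f \o p \o g).
  by move=> y1 y2 /injf/perm_inj/injg.
pose c p := perm (conj_inj p).
have c_inj : injective c.
  move=> p1 p2 /permP c12; apply/permP => x.
  by have := c12 (f x); rewrite !permE /= fK => /injf.
rewrite -(card_imset _ c_inj); apply/subset_leq_card/subsetP => _ /imsetP[p + ->].
rewrite !inE => /forallP p_der; apply/forallP => y; rewrite permE /=.
by apply: contra (p_der (g y)) => /eqP pgy; apply/eqP; rewrite -[in RHS]pgy fK.
Qed.

Lemma card_derangements (T : finType) : #|derangements T| = subfact #|T|.
Proof.
apply/eqP; rewrite eqn_leq.
by rewrite (card_derangements_le (@enum_rankK T) (@enum_valK T))
           (card_derangements_le (@enum_valK T) (@enum_rankK T)).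
Qed.

Definition fixed_set (T : finType) (p : {perm T}) : {set T} := [set x | p x == x].

Section PermsWithFixedSet.
Variables (T : finType) (S : {set T}).

Let Tc := {x : T | x \in ~: S}.

Definition extend_perm_fun (q : {perm Tc}) (x : T) : T :=
  if insub x is Some y then val (q y) else x.

Lemma extend_perm_fun_inj (q : {perm Tc}) : injective (extend_perm_fun q).
Proof.
move=> x1 x2; rewrite /extend_perm_fun.
case: insubP => [y1 _ <-|S1]; case: insubP => [y2 _ <-|S2] //.
- by move/val_inj/perm_inj ->.
- by move=> E; move: S2; rewrite -E (valP (q y1)).
- by move=> E; move: S1; rewrite E (valP (q y2)).
Qed.

Definition extend_perm (q : {perm Tc}) : {perm T} := perm (@extend_perm_fun_inj q).

Lemma extend_perm_inj : injective extend_perm.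
Proof.
move=> q1 q2 /permP E; apply/permP => y; apply: val_inj.
by have := E (val y); rewrite !permE /extend_perm_fun valK.
Qed.

Lemma fixed_set_extend_perm (q : {perm Tc}) :
  q \in derangements Tc -> fixed_set (extend_perm q) = S.
Proof.
rewrite inE => /forallP q_der; apply/setP => x.
rewrite !inE permE /extend_perm_fun; case: insubP => [y _ <-|].
  move: (valP y); rewrite inE => /negbTE ->; apply/negbTE.
  by apply: contra (q_der y) => /eqP/val_inj ->.
by rewrite eqxx inE negbK.
Qed.

Lemma extend_perm_onto (p : {perm T}) :
  fixed_set p = S -> exists2 q, q \in derangements Tc & p = extend_perm q.
Proof.
move=> pS; have inS x : (x \in S) = (p x == x) by rewrite -pS inE.
have p_out (y : Tc) : p (val y) \in ~: S.
  by rewrite inE inS (inj_eq perm_inj) -inS -in_setC (valP y).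
have q_inj : injective (fun y => Sub (p (val y)) (p_out y) : Tc).
  by move=> y1 y2 /(congr1 val); rewrite !SubK => /perm_inj/val_inj.
exists (perm q_inj).
  rewrite inE; apply/forallP => y; rewrite permE; apply: contraTneq (valP y).
  by move=> /(congr1 val); rewrite SubK inE negbK inS => ->.
apply/permP => x; rewrite permE /extend_perm_fun; case: insubP => [y _ <-|].
  by rewrite permE SubK.
by rewrite inE negbK inS => /eqP.
Qed.

Lemma card_perm_fixed_set :
  #|[set p : {perm T} | fixed_set p == S]| = subfact (#|T| - #|S|).
Proof.
have -> : (#|T| - #|S| = #|{: Tc}|)%N.
  by rewrite card_sig -(cardsC S) addKn; apply: eq_card => x; rewrite !inE.
rewrite -card_derangements -(card_imset _ extend_perm_inj).
apply: eq_card => p; rewrite inE; apply/eqP/imsetP => [/extend_perm_onto //|].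
by case=> q /fixed_set_extend_perm qS ->.
Qed.

End PermsWithFixedSet.

Lemma sum_exp2_card_fixed_set m :
  \sum_(p : {perm 'I_m}) 2 ^ #|fixed_set p| = Vcount m.
Proof.
rewrite (partition_big (@fixed_set _) xpredT) //=.
have -> : \sum_(S : {set 'I_m}) \sum_(p | fixed_set p == S) 2 ^ #|fixed_set p|
        = \sum_(S : {set 'I_m}) 2 ^ #|S| * subfact (m - #|S|).
  apply: eq_bigr => S _.
  rewrite (eq_bigr (fun _ => 2 ^ #|S|)); last by move=> p /eqP ->.
  rewrite sum_nat_const mulnC -[m in (m - _)%N]card_ord -card_perm_fixed_set.
  by congr (_ * _); apply: eq_card => p; rewrite inE.
rewrite /Vcount.
rewrite (partition_big (fun S : {set 'I_m} => inord #|S| : 'I_m.+1) xpredT) //=.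
apply: eq_bigr => l _.
have leSm (S : {set 'I_m}) : #|S| < m.+1.
  by rewrite ltnS -[m in (_ <= m)%N]card_ord max_card.
rewrite (eq_bigr (fun _ => 2 ^ l * subfact (m - l))); last first.
  by move=> S /eqP <-; rewrite inordK.
rewrite (sum_nat_const [pred S : {set 'I_m} | inord #|S| == l]) mulnA.
congr (_ * _ * _).
rewrite -[m in 'C(m, _)]card_ord -card_draws; apply: eq_card => S; rewrite !inE.
by apply/eqP/eqP => [<-|E]; [rewrite inordK | apply: val_inj; rewrite /= -E inordK].
Qed.

Lemma derangementE m (p : {perm 'I_m}) : derangement p = (#|fixed_set p| == 0).
Proof.
rewrite cards_eq0; apply/forallP/eqP => [p_der|/setP fix0 i].
  by apply/setP => i; rewrite !inE (negbTE (p_der i)).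
by have := fix0 i; rewrite !inE => ->.
Qed.

Lemma subfactE m : subfact m = \sum_(p : {perm 'I_m}) derangement p.
Proof.
rewrite /subfact -sum1_card big_mkcond; apply: eq_bigr => p _.
by rewrite inE; case: derangement.
Qed.

Definition EC_nash_count m (p : {perm 'I_m}) : nat :=
  if derangement p then 1 else 2 ^ #|fixed_set p|.-1.

Lemma double_EC_nash_count m (p : {perm 'I_m}) :
  2 * EC_nash_count p = 2 ^ #|fixed_set p| + derangement p.
Proof.
rewrite /EC_nash_count derangementE; case: eqP => [->|/eqP] //=.
by rewrite -lt0n addn0 => /prednK {2}<-; rewrite expnS.
Qed.

Local Open Scope ring_scope.

Lemma Lset_in01 (R : realType) m (g : {ffun 'I_m -> R}) i :
  in01 g -> Lset g i <-> ~~ (0 < g i < 1).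
Proof.
move=> /(_ i) /andP [g0 g1]; split; first by case=> ->; rewrite ?ltxx ?andbF.
by rewrite negb_and -!leNgt => /orP [g_le0|g_ge1]; [left|right];
  apply/eqP; rewrite eq_le ?g_le0 ?g_ge1 ?g0 ?g1.
Qed.

Section ProductGame.
Variables (R : realType) (m : nat) (U : 'I_m -> {ffun 'I_m -> bool} -> R).
Variables (v : 'I_m -> bool) (a : 'I_m -> 'I_m -> R).
Hypothesis game : product_game U v a.

Lemma EC_inj (p1 p2 : {perm 'I_m}) g : EC a p1 g -> EC a p2 g -> p1 = p2.
Proof.
have [_ a_inj _] := game; move=> [_ L1 E1] [_ L2 E2]; apply/permP => j.
have fix12 : fixedp p1 j = fixedp p2 j.
  by apply/idP/idP => fixj; [apply/L2/L1 | apply/L1/L2].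
have [fix1|nfix1] := boolP (fixedp p1 j).
  by move: (fix1); rewrite fix12 => /eqP ->; move/eqP: fix1.
have nfix2 : ~~ fixedp p2 j by rewrite -fix12.
apply/eqP; apply: contraT => p12.
by have := a_inj _ _ _ nfix1 nfix2 p12; rewrite -E1 // -E2 // eqxx.
Qed.

Lemma nash_interior_root g i :
  nash U g -> 0 < g i < 1 -> exists2 j, j != i & g j = a i j.
Proof.
have [_ _ lamE] := game; move=> [g01 Ng] gi.
have [/(_ gi) + _ _] := Ng i; rewrite lamE // => /eqP.
rewrite mulf_eq0 signr_eq0 => /prodf_eq0 [j ji].
by rewrite subr_eq0 => /eqP gj; exists j.
Qed.

Lemma nash_EC g : nash U g -> exists p, EC a p g.
Proof.
have [a01 a_inj _] := game; move=> Ng; have g01 := Ng.1.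
pose interior i := 0 < g i < 1.
pose f i :=
  if interior i then odflt i [pick j | (j != i) && (g j == a i j)] else i.
have f_root i : interior i -> (f i != i) && (g (f i) == a i (f i)).
  move=> gi; rewrite /f gi; case: pickP => [j //|no_root].
  have [j ji /eqP gj] := nash_interior_root Ng gi.
  by have := no_root j; rewrite ji gj.
have f_out i : ~~ interior i -> f i = i by rewrite /f => /negbTE ->.
have f_interior i : interior i -> interior (f i).
  move=> /f_root /andP [fi /eqP]; rewrite /interior => ->.
  by apply: a01; rewrite eq_sym.
have f_inj : injective f.
  move=> i1 i2; have [gi1|gi1] := boolP (interior i1);
    have [gi2|gi2] := boolP (interior i2).
  - move=> f12; apply/eqP; apply: contraT => i12.
    have /andP [fi1 /eqP g_fi1] := f_root i1 gi1.
    have /andP [fi2 /eqP g_fi2] := f_root i2 gi2.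
    rewrite -f12 in fi2 g_fi2.
    have := a_inj i1 i2 (f i1); rewrite !(eq_sym _ (f i1)) fi1 fi2 i12.
    by rewrite -g_fi1 -g_fi2 eqxx => /(_ isT isT isT).
  - by move=> f12; move: (f_interior i1 gi1); rewrite f12 f_out // (negbTE gi2).
  - by move=> f12; move: (f_interior i2 gi2); rewrite -f12 f_out // (negbTE gi1).
  - by rewrite !f_out.
pose p := perm f_inj.
have fixedpE j : fixedp (p^-1)%g j = ~~ interior j.
  rewrite /fixedp (can2_eq (permKV p) (permK p)) eq_sym permE.
  apply/idP/idP => [/eqP fj|/f_out/eqP //].
  by apply/negP => /f_root; rewrite fj eqxx.
exists (p^-1)%g; split => // [i|j]; first by rewrite fixedpE; apply: Lset_in01.
rewrite fixedpE negbK => gj; set i := (p^-1)%g j.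
have fi : f i = j by rewrite -[f i]permE permKV.
have gi : interior i by apply: contraTT gj => ngi; rewrite -fi f_out.
by have := f_root i gi; rewrite fi => /andP [_ /eqP].
Qed.

Definition derangement_point (p : {perm 'I_m}) : {ffun 'I_m -> R} :=
  [ffun j => a (p j) j].

Section Derangement.
Variables (p : {perm 'I_m}) (p_der : derangement p).

Lemma derangement_point_interior j : 0 < derangement_point p j < 1.
Proof.
have [a01 _ _] := game; move/forallP: p_der => nfix.
by rewrite ffunE; apply: a01; apply: nfix.
Qed.

Lemma in01_derangement_point : in01 (derangement_point p).
Proof. by move=> j; have /andP [? ?] := derangement_point_interior j; rewrite !ltW. Qed.

Lemma EC_derangementE g : EC a p g <-> g = derangement_point p.
Proof.
move/forallP: p_der => nfix; split=> [[_ _ gE]|->].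
  by apply/ffunP => j; rewrite ffunE gE // /fixedp nfix.
split=> [|i|j _]; [exact: in01_derangement_point| |by rewrite ffunE].
rewrite (Lset_in01 _ in01_derangement_point) derangement_point_interior /fixedp.
by rewrite (negbTE (nfix i)).
Qed.

Lemma nash_derangement_point : nash U (derangement_point p).
Proof.
have [_ _ lamE] := game; move/forallP: p_der => nfix.
split=> [|i]; first exact: in01_derangement_point.
have pti := derangement_point_interior i.
split=> [_|pt0|pt1]; last 2 first.
- by move: pti; rewrite pt0 ltxx.
- by move: pti; rewrite pt1 ltxx andbF.
pose j := (p^-1)%g i; have pj : p j = i by rewrite permKV.
have ji : j != i by apply: contraTneq (nfix i) => ji; rewrite -{1}ji pj eqxx.
rewrite lamE; last exact: in01_derangement_point.
by rewrite (bigD1 j) //= ffunE pj subrr mul0r mulr0.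
Qed.

End Derangement.

Section ECPoints.
Variable p : {perm 'I_m}.

Definition EC_point (B : {set 'I_m}) : {ffun 'I_m -> R} :=
  [ffun i => if p i == i then (i \in B)%:R else a (p i) i].

Lemma EC_point_inj : {in powerset (fixed_set p) &, injective EC_point}.
Proof.
move=> B1 B2; rewrite !powersetE => /subsetP B1fix /subsetP B2fix /ffunP E.
apply/setP => i; have := E i; rewrite !ffunE.
case: ifP => [_ /eqP|nfix _]; first by rewrite eqr_nat; do 2 case: (_ \in _).
have notin (B : {set 'I_m}) : {subset B <= fixed_set p} -> i \notin B.
  by move=> Bfix; apply: contraFN nfix => /Bfix; rewrite inE.
by rewrite (negbTE (notin _ B1fix)) (negbTE (notin _ B2fix)).
Qed.

Lemma EC_EC_point B : EC a p (EC_point B).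
Proof.
have [a01 _ _] := game.
have a01_nfix i : p i != i -> 0 < a (p i) i < 1 by move=> nfix; apply: a01.
split=> [i|i|j]; rewrite /Lset ?ffunE /fixedp; last by move/negbTE ->.
- case: ifP => [_|/negbT /a01_nfix /andP [? ?]]; last by rewrite !ltW.
  by case: (_ \in _); rewrite ?lexx ?ler01.
- case: ifP => [_|/negbT /a01_nfix a_int].
    by split=> // _; case: (_ \in _); [right|left].
  by split=> // -[] a_i; move: a_int; rewrite a_i ?ltxx ?andbF.
Qed.

Lemma EC_pointP g :
  EC a p g -> g = EC_point [set i in fixed_set p | g i == 1].
Proof.
move=> [_ L gE]; apply/ffunP => i; rewrite !ffunE !inE.
case: ifP => [pi|/negbT nfix]; last exact: gE.
have [->|->] : Lset g i by apply/L.
- by rewrite [_ == 1]eq_sym oner_eq0 andbF.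
- by rewrite eqxx andbT pi.
Qed.

Lemma card_EC : has_card (EC a p) (2 ^ #|fixed_set p|).
Proof.
rewrite -card_powerset; apply: has_card_imset EC_point_inj _ => g.
split=> [/EC_pointP gE|[B _ ->]]; last exact: EC_EC_point.
by exists [set i in fixed_set p | g i == 1]; rewrite // powersetE setIdE subsetIl.
Qed.

End ECPoints.

Lemma card_EC_nash p :
  maximal_game U a -> has_card (fun g => EC a p g /\ nash U g) (EC_nash_count p).
Proof.
move=> max; have [p_der|p_nder] := boolP (derangement p).
  rewrite /EC_nash_count p_der; exists [:: derangement_point p]; split=> // g.
  rewrite inE; split=> [/eqP ->|[/EC_derangementE -> //]].
  by split; [apply/EC_derangementE|apply: nash_derangement_point].
have [n [k [ECn ECk nk]]] := max p p_nder.
suff -> : EC_nash_count p = k by [].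
apply/eqP; rewrite -(eqn_pmul2l (isT : (0 < 2)%N)) double_EC_nash_count.
by rewrite (negbTE p_nder) addn0 nk (has_card_unique ECn (card_EC p)).
Qed.

End ProductGame.

Theorem corollary4p5 (R : realType) (m : nat) (hm : (0 < m)%N)
    (U : 'I_m -> {ffun 'I_m -> bool} -> R)
    (v : 'I_m -> bool) (a : 'I_m -> 'I_m -> R) :
  product_game U v a ->
  maximal_game U a ->
  exists N : nat, has_card (nash U) N /\ (2 * N = Vcount m + subfact m)%N.
Proof.
move=> game max; exists (\sum_(p : {perm 'I_m}) EC_nash_count p)%N; split.
  apply: (has_card_bigcup (Q := fun p g => EC a p g /\ nash U g))
    => [p|p1 p2 g [ECg _] [ECg' _]|g].
  - exact: card_EC_nash game p max.
  - exact: (EC_inj game ECg ECg').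
  - split=> [Ng|[p [] //]].
    by have [p ECg] := nash_EC game Ng; exists p.
rewrite big_distrr -sum_exp2_card_fixed_set subfactE -big_split /=.
by apply: eq_bigr => p _; apply: double_EC_nash_count.
Qed.
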